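(* Let $K\ge1$ and let $w_1,w_2,\dots$ be vectors in the probability simplex $\mathcal P_K=\{w\in[0,1]^K:\sum_kw^k=1\}$, with the first $K$ of them satisfying $\sum_{s=1}^Kw_s^k=1$ for every $k\in[K]$ (the burn-in rounds, in which each arm is played exactly once, so $n_K^k=1$ for all $k$). For $t>K$, suppose the arm played at round $t$ is \[ k_t=\mathrm{argmin}_{k\in[K]}\frac{n_{t-1}^k}{\sum_{s=1}^tw_s^k}, \] where $n_t^k$ denotes the number of times arm $k$ has been played up to and including round $t$ (so $n_t^{k_t}=n_{t-1}^{k_t}+1$ and $n_t^k=n_{t-1}^k$ for $k\ne k_t$). Then for all $t\ge K$ and all $k\in[K]$, \[ \sum_{s=1}^tw_s^k-(K-1)\le n_t^k\le\sum_{s=1}^tw_s^k+1. \]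
   Context: This is the tracking rule used within each phase of an arm-sampling algorithm: at each round a sampling distribution $w_t$ over the $K$ arms is produced, and the played arm is chosen by the displayed argmin rule (ties broken arbitrarily). *)

(* Rounds are indexed 1,2,3,...; arms by 'I_K. *)
From mathcomp Require Import all_boot all_order all_algebra.
Set Implicit Arguments. Unset Strict Implicit. Unset Printing Implicit Defensive.
Import Order.TTheory GRing.Theory Num.Theory.
Local Open Scope ring_scope.

Definition npulls (K : nat) (play : nat -> 'I_K) (t : nat) (k : 'I_K) : nat :=
  (\sum_(1 <= s < t.+1) (play s == k))%N.

Definition cumw (R : realFieldType) (K : nat) (w : nat -> 'I_K -> R)
    (t : nat) (k : 'I_K) : R :=
  \sum_(1 <= s < t.+1) w s k.

Definition in_simplex (R : realFieldType) (K : nat) (v : 'I_K -> R) : Prop :=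
  (forall k, 0 <= v k <= 1) /\ \sum_(k < K) v k = 1.

(* At a round t+1 where arm i is played, the argmin rule gives
   c * W^j <= n_t^j for every j, with c := n_t^i / W^i and W := cumulative
   weights up to t+1.  Summing over j, c (t+1) <= t, so c <= 1 and
   n_t^i <= W^i: a played arm never gets more than one pull ahead of its
   cumulative weight, and an arm that is not played only falls further behind.
   Since pull counts and cumulative weights both sum to t, the K-1 other arms
   being at most one ahead each leaves every arm at most K-1 behind. *)

From mathcomp Require Import all_boot all_order all_algebra.
From mathcomp Require Import lra.
Import Order.TTheory GRing.Theory Num.Theory.
Local Open Scope ring_scope.

Lemma ratio_argmin_le (R : realFieldType) (I : finType) (N W : I -> R) (i : I) :
  (forall j, 0 < W j) -> \sum_j N j <= \sum_j W j ->
  (forall j, N i / W i <= N j / W j) -> N i <= W i.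
Proof.
move=> W_gt0 sumN_le imin.
set c := N i / W i.
have sumW_gt0 : 0 < \sum_j W j.
  by rewrite (bigD1 i) //= ltr_wpDr ?sumr_ge0 // => j _; apply/ltW.
have c_le1 : c <= 1.
  rewrite -(ler_pM2r sumW_gt0) mul1r mulr_sumr; apply: le_trans sumN_le.
  by apply: ler_sum => j _; rewrite -ler_pdivlMr.
by rewrite -[N i](divfK (lt0r_neq0 (W_gt0 i))) ler_piMl // ltW.
Qed.

Lemma ler_sub_card_of_sum_eq (R : realFieldType) (I : finType) (N W : I -> R)
    (k : I) :
  \sum_j N j = \sum_j W j -> (forall j, N j <= W j + 1) ->
  W k - (#|I|.-1)%:R <= N k.
Proof.
rewrite (bigD1 k) //= [X in _ = X](bigD1 k) //= => sumNW N_le.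
have : \sum_(j | j != k) N j <= \sum_(j | j != k) (W j + 1).
  by apply: ler_sum => j _; apply: N_le.
rewrite big_split sumr_const cardC1 /=.
lra.
Qed.

Lemma in_simplex_ge0 (R : realFieldType) (K : nat) (v : 'I_K -> R) k :
  in_simplex v -> 0 <= v k.
Proof. by case=> /(_ k) /andP[]. Qed.

Lemma npullsS K (play : nat -> 'I_K) t k :
  npulls play t.+1 k = (npulls play t k + (play t.+1 == k))%N.
Proof. by rewrite /npulls big_nat_recr. Qed.

Lemma cumwS (R : realFieldType) K (w : nat -> 'I_K -> R) t k :
  cumw w t.+1 k = cumw w t k + w t.+1 k.
Proof. by rewrite /cumw big_nat_recr. Qed.

Lemma sum_npulls K (play : nat -> 'I_K) t :
  (\sum_(k < K) npulls play t k = t)%N.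
Proof.
elim: t => [|t IH]; first by apply: big1 => k _; rewrite /npulls big_geq.
under eq_bigr do rewrite npullsS.
rewrite big_split /= IH (bigD1 (play t.+1)) //= eqxx big1 ?addn0 ?addn1 //.
by move=> j; rewrite eq_sym => /negbTE ->.
Qed.

Lemma sum_cumw (R : realFieldType) K (w : nat -> 'I_K -> R) t :
  (forall s, (1 <= s)%N -> in_simplex (w s)) ->
  \sum_(k < K) cumw w t k = t%:R.
Proof.
move=> w_simplex; elim: t => [|t IH].
  by apply: big1 => k _; rewrite /cumw big_geq.
under eq_bigr do rewrite cumwS.
by rewrite big_split /= IH (w_simplex t.+1 isT).2 -natr1.
Qed.

Section Tracking.

Context {R : realFieldType} {K : nat} {w : nat -> 'I_K -> R}.
Context {play : nat -> 'I_K}.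

Hypothesis w_simplex : forall s, (1 <= s)%N -> in_simplex (w s).
Hypothesis cumw_burnin : forall k, cumw w K k = 1.
Hypothesis npulls_burnin : forall k, npulls play K k = 1%N.
Hypothesis play_argmin : forall t, (K < t)%N -> forall j : 'I_K,
  (npulls play t.-1 (play t))%:R / cumw w t (play t)
    <= (npulls play t.-1 j)%:R / cumw w t j.

Lemma cumw_ge1 t k : (K <= t)%N -> 1 <= cumw w t k.
Proof.
move=> Kt; rewrite -(subnK Kt); elim: (t - K)%N => [|m IH].
  by rewrite add0n cumw_burnin.
rewrite addSn cumwS; apply: le_trans IH _.
by rewrite lerDl; apply/in_simplex_ge0/w_simplex.
Qed.

Lemma npulls_played_le t : (K <= t)%N ->
  (npulls play t (play t.+1))%:R <= cumw w t.+1 (play t.+1).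
Proof.
move=> Kt.
apply: (ratio_argmin_le _ _ (fun j => (npulls play t j)%:R) (cumw w t.+1)).
- by move=> j; apply: lt_le_trans ltr01 (cumw_ge1 t.+1 j (leqW Kt)).
- by rewrite -natr_sum sum_npulls sum_cumw // ler_nat.
- exact: play_argmin t.+1 Kt.
Qed.

Lemma npulls_le_cumwD1 t k : (K <= t)%N ->
  (npulls play t k)%:R <= cumw w t k + 1.
Proof.
move=> Kt; rewrite -(subnK Kt); elim: (t - K)%N k => [|m IH] k.
  by rewrite add0n npulls_burnin cumw_burnin lerDl.
rewrite addSn npullsS natrD.
have [<-|_] := eqVneq (play (m + K).+1) k.
  by rewrite lerD2r npulls_played_le ?leq_addl.
rewrite addr0 cumwS; apply: le_trans (IH k) _.
by rewrite lerD2r lerDl; apply/in_simplex_ge0/w_simplex.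
Qed.

End Tracking.

Theorem lemma3 (R : realFieldType) (K : nat) (w : nat -> 'I_K -> R)
    (play : nat -> 'I_K) :
  (0 < K)%N ->
  (forall s, (1 <= s)%N -> in_simplex (w s)) ->
  (forall k, cumw w K k = 1) ->
  (forall k, npulls play K k = 1%N) ->
  (forall t, (K < t)%N -> forall j : 'I_K,
      (npulls play t.-1 (play t))%:R / cumw w t (play t)
        <= (npulls play t.-1 j)%:R / cumw w t j) ->
  forall t, (K <= t)%N -> forall k : 'I_K,
    cumw w t k - (K - 1)%:R <= (npulls play t k)%:R /\
    (npulls play t k)%:R <= cumw w t k + 1.
Proof.
move=> _ w_simplex cumw_burnin npulls_burnin play_argmin t Kt k.
have upper j : (npulls play t j)%:R <= cumw w t j + 1.
  exact: npulls_le_cumwD1 w_simplex cumw_burnin npulls_burnin play_argmin t j Kt.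
split; last exact: upper.
rewrite subn1 -[in K.-1](card_ord K).
by apply: ler_sub_card_of_sum_eq upper; rewrite -natr_sum sum_npulls sum_cumw.
Qed.
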